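(* Let $g\in\Lambda_*$. There is a constant $C$ such that for every triple $a<x<b$ of real numbers, \[\frac{(g(x)-g(a))^2}{x-a}+\frac{(g(x)-g(b))^2}{b-x}\le\frac{(g(b)-g(a))^2}{b-a}+C(b-a).\] Consequently, for every bounded interval $[a,b]$ there is $C'$ such that for every partition $a=x_0<\dots<x_N=b$, $\sum_{j=1}^N\frac{|g(x_j)-g(x_{j-1})|^2}{x_j-x_{j-1}}\le C'\log(N+1)$.
   Context: The Zygmund class $\Lambda_*$ consists of continuous $g\colon\mathbb{R}\to\mathbb{R}$ for which there is $M>0$ with $|g(x+h)-2g(x)+g(x-h)|\le 2Mh$ for all $x\in\mathbb{R}$, $h>0$. *)

From Stdlib Require Import Reals.
Open Scope R_scope.

Definition zygmund (g : R -> R) : Prop :=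
  continuity g /\
  exists M : R, M > 0 /\
    forall x h : R, h > 0 -> Rabs (g (x + h) - 2 * g x + g (x - h)) <= 2 * M * h.

From Stdlib Require Import Reals Lra Lia Psatz.
Open Scope R_scope.

(* Let phi be g minus its chord over [a, b].  The
   difference between the two sides of the inequality is the exact quantity
   (b - a) phi(x)^2 / ((x - a)(b - x)), so it suffices to bound
   phi(x)^2 <= 32 M^2 (x - a)(b - x).  Subtracting an affine function does
   not change second differences, so phi is again Zygmund and vanishes at a
   and b.  First, |phi| <= M (b - a) on [a, b] (look at a maximum point of
   |phi|).  Then a dyadic induction towards the endpoint a improves this to
   phi(x)^2 <= 16 M^2 (x - a)(b - a); reflecting gives the same bound near b.

   For any Q satisfying the three-point inequality
   Q a x + Q x b <= Q a b + C (b - a), merging the N cells of a partition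
   pairwise along a binary tree of depth k with N <= 2^k costs at most
   C (b - a) per level, and k can be chosen with k ln 2 <= 2 ln (N + 1). *)

Definition zygmund_bound (f : R -> R) (M : R) : Prop :=
  forall x h : R, h > 0 -> Rabs (f (x + h) - 2 * f x + f (x - h)) <= 2 * M * h.

Lemma zygmund_bound_sub_affine (f : R -> R) (M c p d : R) :
  zygmund_bound f M -> zygmund_bound (fun y => f y - (c * (y - p) + d)) M.
Proof.
  intros Hf x h Hh.
  replace (f (x + h) - (c * (x + h - p) + d) - 2 * (f x - (c * (x - p) + d))
           + (f (x - h) - (c * (x - h - p) + d)))
    with (f (x + h) - 2 * f x + f (x - h)) by ring.
  now apply Hf.
Qed.

Lemma zygmund_bound_reflect (f : R -> R) (M : R) :
  zygmund_bound f M -> zygmund_bound (fun y => f (- y)) M.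
Proof.
  intros Hf x h Hh.
  replace (- (x + h)) with (- x - h) by ring.
  replace (- (x - h)) with (- x + h) by ring.
  replace (f (- x - h) - 2 * f (- x) + f (- x + h))
    with (f (- x + h) - 2 * f (- x) + f (- x - h)) by ring.
  now apply Hf.
Qed.

Lemma zygmund_midpoint_bound (f : R -> R) (M x h : R) :
  zygmund_bound f M -> h > 0 ->
  Rabs (f x) <= (Rabs (f (x + h)) + Rabs (f (x - h))) / 2 + M * h.
Proof.
  intros Hf Hh.
  pose proof (Hf x h Hh) as Hsecond.
  pose proof (Rabs_triang (f (x + h) + f (x - h))
                          (- (f (x + h) - 2 * f x + f (x - h)))) as Htri.
  pose proof (Rabs_triang (f (x + h)) (f (x - h))).
  replace (f (x + h) + f (x - h) + - (f (x + h) - 2 * f x + f (x - h)))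
    with (2 * f x) in Htri by ring.
  rewrite Rabs_Ropp, Rabs_mult, (Rabs_right 2) in Htri by lra.
  lra.
Qed.

(* A Zygmund function vanishing at both ends of [a, b] is bounded there by
   M (b - a): at a maximum point y0 of |f|, compare with the reflection of
   the nearer endpoint across y0. *)
Lemma zygmund_sup_bound (f : R -> R) (M a b : R) :
  M > 0 -> a < b -> (forall y, continuity_pt f y) -> zygmund_bound f M ->
  f a = 0 -> f b = 0 ->
  forall y, a <= y <= b -> Rabs (f y) <= M * (b - a).
Proof.
  intros HM Hab Hc Hf Ha Hb.
  destruct (continuity_ab_maj (fun y => Rabs (f y)) a b) as [y0 [Hmax Hy0]].
  { lra. }
  { intros c _. apply (continuity_pt_comp f Rabs); [apply Hc | apply Rcontinuity_abs]. }
  assert (Hy0_bound : Rabs (f y0) <= M * (b - a)).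
  { destruct (Rle_dec (y0 - a) (b - y0)) as [Hnear_a | Hnear_b].
    - destruct (Req_dec y0 a) as [-> | Hne].
      { rewrite Ha, Rabs_R0. apply Rmult_le_pos; lra. }
      pose proof (zygmund_midpoint_bound f M y0 (y0 - a) Hf ltac:(lra)) as Hmid.
      replace (y0 - (y0 - a)) with a in Hmid by ring.
      pose proof (Hmax (y0 + (y0 - a)) ltac:(lra)).
      rewrite Ha, Rabs_R0 in Hmid.
      assert (M * (2 * (y0 - a)) <= M * (b - a)) by (apply Rmult_le_compat_l; lra).
      simpl in *. lra.
    - destruct (Req_dec y0 b) as [-> | Hne].
      { rewrite Hb, Rabs_R0. apply Rmult_le_pos; lra. }
      pose proof (zygmund_midpoint_bound f M y0 (b - y0) Hf ltac:(lra)) as Hmid.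
      replace (y0 + (b - y0)) with b in Hmid by ring.
      pose proof (Hmax (y0 - (b - y0)) ltac:(lra)).
      rewrite Hb, Rabs_R0 in Hmid.
      assert (M * (2 * (b - y0)) <= M * (b - a)) by (apply Rmult_le_compat_l; lra).
      simpl in *. lra. }
  intros y Hy. apply Rle_trans with (Rabs (f y0)); [apply Hmax; exact Hy | exact Hy0_bound].
Qed.

(* Base case of the dyadic induction: far from the endpoint, the uniform
   bound T <= M L already gives the square-root estimate. *)
Lemma square_bound_of_sup (T M u L : R) :
  0 < M -> 0 < L -> 0 <= T -> T <= M * L -> L <= 4 * u ->
  T ^ 2 <= 16 * M ^ 2 * u * L.
Proof.
  intros HM HL HT HTL HLu.
  assert (T ^ 2 <= (M * L) ^ 2) by (apply pow_incr; lra).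
  nra.
Qed.

(* Inductive step: the square-root estimate at distance 2u from the endpoint
   and the midpoint bound T <= T'/2 + M u give the estimate at distance u. *)
Lemma square_bound_step (T T' M u L : R) :
  0 < M -> 0 < u -> u <= L -> 0 <= T -> 0 <= T' ->
  T <= T' / 2 + M * u -> T' ^ 2 <= 16 * M ^ 2 * (2 * u) * L ->
  T ^ 2 <= 16 * M ^ 2 * u * L.
Proof.
  intros HM Hu HuL HT HT' Hstep Hsq.
  assert (T ^ 2 <= (T' / 2 + M * u) ^ 2) by (apply pow_incr; lra).
  assert (T' * (M * u) <= T' ^ 2 / 8 + 2 * (M * u) ^ 2)
    by (pose proof (pow2_ge_0 (T' - 4 * (M * u))); lra).
  assert (M ^ 2 * u * u <= M ^ 2 * u * L)
    by (apply Rmult_le_compat_l; [apply Rmult_le_pos; [apply pow2_ge_0 | lra] | lra]).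
  nra.
Qed.

Lemma exists_pow2_ge (r : R) : exists k : nat, r <= 2 ^ k.
Proof.
  destruct (Pow_x_infinity 2 ltac:(rewrite Rabs_right; lra) r) as [k Hk].
  exists k. specialize (Hk k (le_n k)).
  rewrite Rabs_right in Hk by (apply Rle_ge, pow_le; lra). lra.
Qed.

Section EndpointBound.
Variables (f : R -> R) (M a b : R).
Hypotheses (HM : M > 0) (Hab : a < b) (Hf : zygmund_bound f M) (Ha : f a = 0).
Hypothesis Hsup : forall y, a <= y <= b -> Rabs (f y) <= M * (b - a).

(* The estimate at points whose distance to a is at least (b - a) / 2^(k+2),
   by induction on k, doubling the distance to a at each step. *)
Lemma endpoint_bound_dyadic (k : nat) :
  forall x, a < x <= b -> b - a <= (x - a) * 2 ^ (k + 2) ->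
  (f x) ^ 2 <= 16 * M ^ 2 * (x - a) * (b - a).
Proof.
  induction k as [|k IH]; intros x Hx Hk; rewrite <- pow2_abs.
  - apply square_bound_of_sup; try lra; [apply Rabs_pos | apply Hsup; lra | simpl in Hk; lra].
  - destruct (Rle_dec (b - a) ((x - a) * 4)) as [Hfar | Hnear].
    { apply square_bound_of_sup; try lra; [apply Rabs_pos | apply Hsup; lra]. }
    assert (Hk' : b - a <= (x + (x - a) - a) * 2 ^ (k + 2)).
    { replace (S k + 2)%nat with (S (k + 2)) in Hk by lia. simpl in Hk. lra. }
    pose proof (IH (x + (x - a)) ltac:(lra) Hk') as Hfar_sq.
    rewrite <- pow2_abs in Hfar_sq.
    replace (x + (x - a) - a) with (2 * (x - a)) in Hfar_sq by ring.
    pose proof (zygmund_midpoint_bound f M x (x - a) Hf ltac:(lra)) as Hmid.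
    replace (x - (x - a)) with a in Hmid by ring.
    rewrite Ha, Rabs_R0, Rplus_0_r in Hmid.
    apply (square_bound_step _ (Rabs (f (x + (x - a))))); try lra; apply Rabs_pos.
Qed.

Lemma endpoint_bound :
  forall x, a <= x <= b -> (f x) ^ 2 <= 16 * M ^ 2 * (x - a) * (b - a).
Proof.
  intros x Hx.
  destruct (Req_dec x a) as [-> | Hne].
  { rewrite Ha. nra. }
  destruct (exists_pow2_ge ((b - a) / (x - a))) as [k Hk].
  apply (endpoint_bound_dyadic k); [lra |].
  rewrite pow_add.
  assert (Hdiv : b - a <= (x - a) * 2 ^ k).
  { apply Rmult_le_compat_l with (r := x - a) in Hk; [| lra].
    replace ((x - a) * ((b - a) / (x - a))) with (b - a) in Hk by (field; lra). exact Hk. }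
  pose proof (pow_R1_Rle 2 k ltac:(lra)).
  simpl. nra.
Qed.

End EndpointBound.

Definition chord_deviation (g : R -> R) (a b : R) (y : R) : R :=
  g y - ((g b - g a) / (b - a) * (y - a) + g a).

Lemma chord_deviation_bound (g : R -> R) (M a x b : R) :
  M > 0 -> continuity g -> zygmund_bound g M -> a < x -> x < b ->
  (chord_deviation g a b x) ^ 2 <= 32 * M ^ 2 * (x - a) * (b - x).
Proof.
  intros HM Hc Hg Hax Hxb.
  set (phi := chord_deviation g a b).
  assert (Hphi_cont : forall y, continuity_pt phi y) by (intro y; unfold phi, chord_deviation; reg).
  assert (Hphi_zyg : zygmund_bound phi M) by now apply zygmund_bound_sub_affine.
  assert (Hphi_a : phi a = 0) by (unfold phi, chord_deviation; ring).
  assert (Hphi_b : phi b = 0) by (unfold phi, chord_deviation; field; lra).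
  pose proof (zygmund_sup_bound phi M a b HM ltac:(lra) Hphi_cont Hphi_zyg Hphi_a Hphi_b) as Hsup.
  pose proof (endpoint_bound phi M a b HM ltac:(lra) Hphi_zyg Hphi_a Hsup x ltac:(lra)) as Hnear_a.
  pose proof (endpoint_bound (fun y => phi (- y)) M (- b) (- a) HM ltac:(lra)
                (zygmund_bound_reflect phi M Hphi_zyg) ltac:(cbv beta; now rewrite Ropp_involutive)
                ltac:(intros y Hy; replace (- a - - b) with (b - a) by ring; apply Hsup; lra)
                (- x) ltac:(lra)) as Hnear_b.
  cbv beta in Hnear_b. rewrite Ropp_involutive in Hnear_b.
  replace (- x - - b) with (b - x) in Hnear_b by ring.
  replace (- a - - b) with (b - a) in Hnear_b by ring.
  assert (0 <= M ^ 2) by apply pow2_ge_0.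
  destruct (Rle_dec (x - a) (b - x)).
  - assert (M ^ 2 * (x - a) * (b - a) <= M ^ 2 * (x - a) * (2 * (b - x)))
      by (apply Rmult_le_compat_l; [apply Rmult_le_pos |]; lra).
    lra.
  - assert (M ^ 2 * (b - x) * (b - a) <= M ^ 2 * (b - x) * (2 * (x - a)))
      by (apply Rmult_le_compat_l; [apply Rmult_le_pos |]; lra).
    lra.
Qed.

Lemma three_point_identity (g : R -> R) (a x b : R) :
  a < x -> x < b ->
  (g x - g a) ^ 2 / (x - a) + (g x - g b) ^ 2 / (b - x)
  = (g b - g a) ^ 2 / (b - a)
    + (b - a) * ((chord_deviation g a b x) ^ 2 / ((x - a) * (b - x))).
Proof. intros Hax Hxb. unfold chord_deviation. field. lra. Qed.

Lemma three_point_inequality (g : R -> R) (M : R) :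
  M > 0 -> continuity g -> zygmund_bound g M ->
  forall a x b, a < x -> x < b ->
  (g x - g a) ^ 2 / (x - a) + (g x - g b) ^ 2 / (b - x)
    <= (g b - g a) ^ 2 / (b - a) + 32 * M ^ 2 * (b - a).
Proof.
  intros HM Hc Hg a x b Hax Hxb.
  rewrite (three_point_identity g a x b Hax Hxb).
  apply Rplus_le_compat_l.
  rewrite (Rmult_comm (32 * M ^ 2)).
  apply Rmult_le_compat_l; [lra |].
  pose proof (chord_deviation_bound g M a x b HM Hc Hg Hax Hxb) as Hdev.
  set (D := chord_deviation g a b x) in *.
  apply Rmult_le_reg_r with ((x - a) * (b - x)); [apply Rmult_lt_0_compat; lra |].
  replace (D ^ 2 / ((x - a) * (b - x)) * ((x - a) * (b - x))) with (D ^ 2) by (field; lra).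
  lra.
Qed.

Section PartitionSums.
Variables (Q : R -> R -> R) (C : R).
Hypothesis HC : 0 <= C.
Hypothesis Hthree : forall a x b, a < x -> x < b -> Q a x + Q x b <= Q a b + C * (b - a).
Variable xs : nat -> R.

Fixpoint chain_sum (i n : nat) : R :=
  match n with
  | O => 0
  | S n => chain_sum i n + Q (xs (i + n)) (xs (S (i + n)))
  end.

Lemma chain_sum_split (i m n : nat) :
  chain_sum i (m + n) = chain_sum i m + chain_sum (i + m) n.
Proof.
  induction n as [|n IH]; simpl.
  - rewrite Nat.add_0_r. ring.
  - rewrite Nat.add_succ_r. simpl. rewrite IH.
    replace (i + (m + n))%nat with (i + m + n)%nat by lia. ring.
Qed.

Lemma chain_sum_from_0 (n : nat) :
  sum_f_R0 (fun j => Q (xs j) (xs (S j))) n = chain_sum 0 (S n).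
Proof.
  induction n as [|n IH]; [simpl; ring |].
  simpl sum_f_R0. rewrite IH. reflexivity.
Qed.

Lemma chain_increasing (i n : nat) :
  (forall j, (i <= j < i + n)%nat -> xs j < xs (S j)) ->
  forall p q, (i <= p)%nat -> (p < q)%nat -> (q <= i + n)%nat -> xs p < xs q.
Proof.
  intros Hinc p q Hp Hpq Hq. induction q as [|q IH]; [lia |].
  destruct (Nat.eq_dec p q) as [-> | Hne]; [apply Hinc; lia |].
  apply Rlt_trans with (xs q); [apply IH; lia | apply Hinc; lia].
Qed.

(* Merging along a binary tree of depth k: each level costs C times the
   length of the whole interval. *)
Lemma chain_sum_dyadic_bound (k : nat) :
  forall n i, (1 <= n)%nat -> (n <= 2 ^ k)%nat ->
  (forall j, (i <= j < i + n)%nat -> xs j < xs (S j)) ->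
  chain_sum i n <= Q (xs i) (xs (i + n)) + C * (xs (i + n) - xs i) * INR k.
Proof.
  induction k as [|k IH]; intros n i Hn Hnk Hinc.
  - simpl in Hnk. replace n with 1%nat by lia. simpl.
    rewrite Nat.add_0_r, Nat.add_1_r. lra.
  - destruct (Nat.eq_dec n 1) as [-> | Hn1].
    + simpl chain_sum. rewrite Nat.add_0_r, Nat.add_1_r.
      assert (xs i < xs (S i)) by (apply Hinc; lia).
      assert (0 <= C * (xs (S i) - xs i) * INR (S k))
        by (apply Rmult_le_pos; [apply Rmult_le_pos; lra | apply pos_INR]).
      lra.
    + set (m := (n / 2)%nat).
      assert (Hm : (1 <= m /\ 2 * m <= n <= 2 * m + 1)%nat).
      { pose proof (Nat.div_mod n 2 ltac:(lia)). pose proof (Nat.mod_upper_bound n 2 ltac:(lia)).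
        unfold m. lia. }
      assert (Hpow : (2 ^ S k = 2 * 2 ^ k)%nat) by (simpl; lia).
      replace n with (m + (n - m))%nat at 1 by lia.
      rewrite chain_sum_split.
      pose proof (IH m i ltac:(lia) ltac:(lia) ltac:(intros j Hj; apply Hinc; lia)) as Hleft.
      pose proof (IH (n - m)%nat (i + m)%nat ltac:(lia) ltac:(lia)
                    ltac:(intros j Hj; apply Hinc; lia)) as Hright.
      replace (i + m + (n - m))%nat with (i + n)%nat in Hright by lia.
      pose proof (Hthree (xs i) (xs (i + m)%nat) (xs (i + n)%nat)
                    ltac:(apply (chain_increasing i n Hinc); lia)
                    ltac:(apply (chain_increasing i n Hinc); lia)).
      assert (Hlevels : C * (xs (i + m)%nat - xs i) * INR k
                        + C * (xs (i + n)%nat - xs (i + m)%nat) * INR k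
                        = C * (xs (i + n)%nat - xs i) * INR k) by ring.
      rewrite S_INR. lra.
Qed.

End PartitionSums.

Lemma ln_le_compat (x y : R) : 0 < x -> x <= y -> ln x <= ln y.
Proof.
  intros Hx Hxy. destruct (Req_dec x y) as [-> | Hne]; [lra |].
  left. apply ln_increasing; lra.
Qed.

Lemma dyadic_depth_log_bound (N : nat) :
  (1 <= N)%nat -> exists k : nat, (N <= 2 ^ k)%nat /\ INR k * ln 2 <= 2 * ln (INR N + 1).
Proof.
  intros HN.
  exists (S (Nat.log2 N)).
  pose proof (Nat.log2_spec N ltac:(lia)) as [Hlog_low Hlog_high].
  split; [lia |].
  assert (Hpow : INR (2 ^ S (Nat.log2 N)) <= 2 * INR N).
  { replace (2 * INR N) with (INR (2 * N)) by (rewrite mult_INR; simpl; ring).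
    apply le_INR. rewrite Nat.pow_succ_r'. lia. }
  rewrite pow_INR in Hpow. simpl INR in Hpow at 1. replace (1 + 1) with 2 in Hpow by ring.
  assert (1 <= INR N) by (apply (le_INR 1); lia).
  rewrite <- ln_pow by lra.
  replace (2 * ln (INR N + 1)) with (INR 2 * ln (INR N + 1)) by (simpl; ring).
  rewrite <- ln_pow by lra.
  apply ln_le_compat; [apply pow_lt; lra | nra].
Qed.

Lemma partition_sum_log_bound (Q : R -> R -> R) (C : R) :
  0 <= C ->
  (forall a x b, a < x -> x < b -> Q a x + Q x b <= Q a b + C * (b - a)) ->
  forall a b : R, exists C' : R, forall (N : nat) (xs : nat -> R),
    (1 <= N)%nat -> xs 0%nat = a -> xs N = b ->
    (forall j : nat, (j < N)%nat -> xs j < xs (S j)) ->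
    sum_f_R0 (fun j => Q (xs j) (xs (S j))) (N - 1) <= C' * ln (INR N + 1).
Proof.
  intros HC Hthree a b.
  exists ((Rabs (Q a b) + 2 * (C * (b - a))) / ln 2).
  intros N xs HN Hx0 HxN Hinc.
  assert (Hinc0 : forall j, (0 <= j < 0 + N)%nat -> xs j < xs (S j)) by (intros; apply Hinc; lia).
  assert (Hab : a < b) by (rewrite <- Hx0, <- HxN; apply (chain_increasing xs 0 N Hinc0); lia).
  destruct (dyadic_depth_log_bound N HN) as [k [HNk Hk]].
  pose proof (chain_sum_dyadic_bound Q C HC Hthree xs k N 0 HN HNk Hinc0) as Htree.
  rewrite Nat.add_0_l, Hx0, HxN in Htree.
  rewrite chain_sum_from_0. replace (S (N - 1)) with N by lia.
  assert (Hln2 : 0 < ln 2) by (rewrite <- ln_1; apply ln_increasing; lra).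
  assert (Hln2N : ln 2 <= ln (INR N + 1)).
  { apply ln_le_compat; [lra |]. pose proof (le_INR 1 N HN). simpl in *. lra. }
  assert (HQ : Q a b * ln 2 <= Rabs (Q a b) * ln (INR N + 1)).
  { apply Rle_trans with (Rabs (Q a b) * ln 2);
      [apply Rmult_le_compat_r; [lra | apply Rle_abs] |
       apply Rmult_le_compat_l; [apply Rabs_pos | lra]]. }
  assert (Hdepth : C * (b - a) * (INR k * ln 2) <= C * (b - a) * (2 * ln (INR N + 1)))
    by (apply Rmult_le_compat_l; [apply Rmult_le_pos |]; lra).
  apply Rmult_le_reg_r with (ln 2); [lra |].
  replace ((Rabs (Q a b) + 2 * (C * (b - a))) / ln 2 * ln (INR N + 1) * ln 2)
    with ((Rabs (Q a b) + 2 * (C * (b - a))) * ln (INR N + 1)) by (field; lra).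
  nra.
Qed.

Theorem mainTheorem9 (g : R -> R) (hg : zygmund g) :
  (exists C : R, forall a x b : R, a < x -> x < b ->
     (g x - g a) ^ 2 / (x - a) + (g x - g b) ^ 2 / (b - x)
       <= (g b - g a) ^ 2 / (b - a) + C * (b - a))
  /\
  (forall a b : R, exists C' : R, forall (N : nat) (xs : nat -> R),
     (1 <= N)%nat -> xs 0%nat = a -> xs N = b ->
     (forall j : nat, (j < N)%nat -> xs j < xs (S j)) ->
     sum_f_R0 (fun j => (Rabs (g (xs (S j)) - g (xs j))) ^ 2 / (xs (S j) - xs j)) (N - 1)
       <= C' * ln (INR N + 1)).
Proof.
  destruct hg as [Hcont [M [HM Hzyg]]].
  pose proof (three_point_inequality g M HM Hcont Hzyg) as Hthree.
  split; [exists (32 * M ^ 2); exact Hthree |].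
  set (energy := fun p q => (g q - g p) ^ 2 / (q - p)).
  assert (Henergy : forall a x b, a < x -> x < b ->
            energy a x + energy x b <= energy a b + 32 * M ^ 2 * (b - a)).
  { intros a x b Hax Hxb. unfold energy.
    replace ((g b - g x) ^ 2) with ((g x - g b) ^ 2) by ring. now apply Hthree. }
  intros a b.
  destruct (partition_sum_log_bound energy (32 * M ^ 2)
              ltac:(pose proof (pow2_ge_0 M); lra) Henergy a b) as [C' HC'].
  exists C'. intros N xs HN Hx0 HxN Hinc.
  rewrite (sum_eq _ (fun j => energy (xs j) (xs (S j))))
    by (intros j _; unfold energy; now rewrite pow2_abs).
  now apply HC'.
Qed.
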